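(* Let $P^1,\dots,P^m\in\Delta^n$ ($m\ge 2$) be the rows of a channel matrix $\Phi$ and assume they are in general position. For $k=0,1,\dots,m-2$ let $L_k=L(P^{k+1},\dots,P^m)$. Let $Q^0\in L_0$ be the equidistant point from $P^1,\dots,P^m$, and define recursively $Q^k=\pi(Q^{k-1}\,|\,L_k)$ for $k=1,\dots,m-2$. Let $\boldsymbol\lambda^k=(\lambda^k_1,\dots,\lambda^k_m)$ be the barycentric coordinate of $Q^k$ about $P^1,\dots,P^m$. Let $K\in\{0,1,\dots,m-2\}$ and assume: for every $k=0,1,\dots,K-1$, $\lambda^k_i=0$ for $i=1,\dots,k$, $\lambda^k_{k+1}<0$, and $\lambda^k_i>0$ for $i=k+2,\dots,m$; and $\lambda^K_i=0$ for $i=1,\dots,K$ and $\lambda^K_i>0$ for $i=K+1,\dots,m$ (when $K=0$ the assumption is instead $\lambda^0_i\ge 0$ for all $i=1,\dots,m$). Then the output distribution achieving the channel capacity is $Q^\ast=Q^K$, and the channel capacity is $C=D(P^{K+1}\|Q^K)$.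
   Context: $\Delta^n=\{Q=(Q_1,\dots,Q_n): Q_j>0,\ \sum_j Q_j=1\}$ and $\bar\Delta^m=\{\boldsymbol\lambda\in\mathbb{R}^m:\lambda_i\ge0,\sum_i\lambda_i=1\}$. $D(Q\|Q')=\sum_j Q_j\log(Q_j/Q'_j)$ is the Kullback–Leibler divergence. The channel matrix $\Phi$ is the $m\times n$ matrix with rows $P^i=(P^i_1,\dots,P^i_n)$ (conditional output distributions given input $x_i$). The rows are in general position if $P^2-P^1,\dots,P^m-P^1$ are linearly independent. For points $S^1,\dots,S^r\in\Delta^n$, $L(S^1,\dots,S^r)=\{\sum_i\lambda_iS^i:\sum_i\lambda_i=1\}\cap\Delta^n$ (affine subspace). For $Q'\in\Delta^n$ and such an affine subspace $L$, $\pi(Q'|L)$ denotes the unique $Q\in L$ minimizing $D(Q\|Q')$. The barycentric coordinate of $Q\in L(P^1,\dots,P^m)$ about $P^1,\dots,P^m$ is the unique $\boldsymbol\lambda\in\mathbb{R}^m$ with $\sum_i\lambda_i=1$ and $Q=\sum_i\lambda_iP^i$. The equidistant point from $P^1,\dots,P^m$ is the unique $Q^0\in L(P^1,\dots,P^m)$ with $D(P^1\|Q^0)=\dots=D(P^m\|Q^0)$. The mutual information is $I(\boldsymbol\lambda,\Phi)=\sum_{i,j}\lambda_iP^i_j\log(P^i_j/Q_j)$ with $Q=\boldsymbol\lambda\Phi$; the channel capacity is $C=\max_{\boldsymbol\lambda\in\bar\Delta^m}I(\boldsymbol\lambda,\Phi)$, and the capacity-achieving output distribution $Q^\ast$ is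 $\boldsymbol\lambda^\ast\Phi$ for a maximizing $\boldsymbol\lambda^\ast$ (it is unique, and equals the minimizer of $\max_i D(P^i\|Q)$ over output distributions $Q$). *)

From HB Require Import structures.
From mathcomp Require Import all_boot all_order all_algebra.
From mathcomp Require Import all_classical all_reals exp.
Set Implicit Arguments. Unset Strict Implicit. Unset Printing Implicit Defensive.
Import Order.TTheory GRing.Theory Num.Theory.
Local Open Scope ring_scope.

Section Channel.
Variables (R : realType) (m n : nat).

Definition in_open_simplex (Q : 'rV[R]_n) : Prop :=
  (forall j, 0 < Q ord0 j) /\ \sum_j Q ord0 j = 1.

Definition in_closed_simplex (lam : 'rV[R]_m) : Prop :=
  (forall i, 0 <= lam ord0 i) /\ \sum_i lam ord0 i = 1.

Definition KL (Q Q' : 'rV[R]_n) : R :=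
  \sum_j Q ord0 j * ln (Q ord0 j / Q' ord0 j).

(* Rows in general position: P^2-P^1, ..., P^m-P^1 linearly independent
   (i0 is the index of the first row P^1). *)
Definition general_position (Phi : 'M[R]_(m, n)) : Prop :=
  forall i0 : 'I_m, val i0 = 0%N ->
  forall a : 'I_m -> R,
    \sum_(i | i != i0) a i *: (row i Phi - row i0 Phi) = 0 ->
    forall i, i != i0 -> a i = 0.

Definition affL (Phi : 'M[R]_(m, n)) (A : pred 'I_m) (Q : 'rV[R]_n) : Prop :=
  in_open_simplex Q /\
  exists c : 'I_m -> R, \sum_(i | A i) c i = 1 /\
     Q = \sum_(i | A i) c i *: row i Phi.

Definition is_Iproj (Phi : 'M[R]_(m, n)) (A : pred 'I_m) (Q' Q : 'rV[R]_n) : Prop :=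
  affL Phi A Q /\ forall Q'', affL Phi A Q'' -> KL Q Q' <= KL Q'' Q'.

Definition is_equidistant (Phi : 'M[R]_(m, n)) (Q : 'rV[R]_n) : Prop :=
  affL Phi predT Q /\ forall i i', KL (row i Phi) Q = KL (row i' Phi) Q.

Definition is_barycentric (Phi : 'M[R]_(m, n)) (Q : 'rV[R]_n) (lam : 'rV[R]_m) : Prop :=
  \sum_i lam ord0 i = 1 /\ Q = lam *m Phi.

Definition mutual_info (lam : 'rV[R]_m) (Phi : 'M[R]_(m, n)) : R :=
  let Q := lam *m Phi in
  \sum_i \sum_j lam ord0 i * Phi i j * ln (Phi i j / Q ord0 j).

End Channel.

(* By the compensation identity
     sum_i l_i D(P^i || Q) = I(l, Phi) + D(l Phi || Q),
   a point Q with D(P^i || Q) <= C for every i gives I(l, Phi) + D(l Phi || Q) <= C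
   for every input l; if moreover D(P^i || Q) = C on the support of an input l with
   l Phi = Q, then C is the capacity and Q the unique capacity-achieving output.
   We apply this to Q^K and lambda^K.  The Pythagorean identity of I-projections onto
   affine hulls makes each Q^k equidistant from P^(k+1), ..., P^m, at a distance r_k
   which does not increase with k.  The bound D(P^i || Q^K) <= r_K for i <= K follows by
   downward induction on i: the compensation sum of lambda^i against Q^K is at least
   r_i >= r_K, and lambda^i has its only negative weight on P^i. *)

From HB Require Import structures.
From mathcomp Require Import all_boot all_order all_algebra.
From mathcomp Require Import all_classical all_reals exp.
From mathcomp Require Import ring lra.
Set Implicit Arguments. Unset Strict Implicit. Unset Printing Implicit Defensive.
Import Order.TTheory GRing.Theory Num.Theory.
Local Open Scope ring_scope.

Section RealInequalities.
Variable R : realType.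
Implicit Types a b d x M S : R.

Lemma ln_le_subr1 x : 0 < x -> ln x <= x - 1.
Proof. by move=> x0; have := @le_ln1Dx R (x - 1); rewrite [1 + _]addrC subrK; apply; lra. Qed.

Lemma ln_lt_subr1 x : 0 < x -> x != 1 -> ln x < x - 1.
Proof.
move=> x0 x1; have := @expR_gt1Dx R (ln x); rewrite lnK ?posrE // ln_eq0 // => /(_ x1).
lra.
Qed.

Lemma subr_lt_mul_ln_div a b : 0 < a -> 0 < b -> a != b -> a - b < a * ln (a / b).
Proof.
move=> a0 b0 ab; have ba : b / a != 1.
  by apply: contra ab => /eqP/divr1_eq ->.
have := ln_lt_subr1 (divr_gt0 b0 a0) ba.
rewrite !ln_div ?posrE // -(ltr_pM2l a0).
have -> : a * (b / a - 1) = b - a by field; rewrite gt_eqF.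
have -> : a * (ln a - ln b) = - (a * (ln b - ln a)) by ring.
lra.
Qed.

Lemma subr_le_mul_ln_div a b : 0 < a -> 0 < b -> a - b <= a * ln (a / b).
Proof.
move=> a0 b0; case: (eqVneq a b) => [->|ab]; last exact/ltW/subr_lt_mul_ln_div.
by rewrite divff ?gt_eqF // ln1 mulr0 subrr.
Qed.

Lemma mul_ln_div_le a b : 0 < a -> 0 < b -> a * ln (a / b) <= (a - b) ^+ 2 / b + (a - b).
Proof.
move=> a0 b0; have h := ln_le_subr1 (divr_gt0 a0 b0).
have <- : a * (a / b - 1) = (a - b) ^+ 2 / b + (a - b) by field; rewrite gt_eqF.
by rewrite ler_wpM2l // ltW.
Qed.

Lemma mul_ln_div_split a b c : 0 < a -> 0 < b -> 0 < c ->
  a * ln (a / c) = a * ln (a / b) + a * ln (b / c).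
Proof. by move=> a0 b0 c0; rewrite !ln_div ?posrE //; ring. Qed.

(* The witness [t = - S e] makes [t S + t^2 M = S^2 e (e M - 1)] negative. *)
Lemma quadratic_ge0_stationary d S M : 0 < d -> 0 <= M ->
  (forall t, - d < t < d -> 0 <= t * S + t ^+ 2 * M) -> S = 0.
Proof.
move=> d0 M0 hq; set D := (`|S| + 1) / d + M + 1.
have D0 : 0 < D by rewrite /D; have := divr_ge0 (addr_ge0 (normr_ge0 S) ler01) (ltW d0); lra.
set e := D^-1; have e0 : 0 < e by rewrite invr_gt0.
have eD : e * D = 1 by rewrite mulVf ?gt_eqF.
have eM : e * M < 1 by rewrite /D in eD; have := divr_gt0 (ltr_pwDr ltr01 (normr_ge0 S)) d0; nra.
have eS : `|S| * e < d.
  have : e * ((`|S| + 1) / d) < 1 by rewrite /D in eD; nra.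
  by rewrite mulrA ltr_pdivrMr // mul1r; nra.
have := hq (- S * e); rewrite -ltr_norml normrM normrN gtr0_norm // => /(_ eS).
have -> : - S * e * S + (- S * e) ^+ 2 * M = S ^+ 2 * e * (e * M - 1) by ring.
have X0 : 0 <= S ^+ 2 * e by rewrite mulr_ge0 ?sqr_ge0 ?ltW.
move=> hS; have : S ^+ 2 * e == 0 by rewrite eq_le X0 andbT; nra.
by rewrite mulf_eq0 sqrf_eq0 (gt_eqF e0) orbF => /eqP.
Qed.

End RealInequalities.

Section KullbackLeibler.
Variables (R : realType) (n : nat).
Implicit Types A B : 'rV[R]_n.

Lemma KL_ge0 A B : (forall j, 0 < A ord0 j) -> (forall j, 0 < B ord0 j) ->
  \sum_j A ord0 j = \sum_j B ord0 j -> 0 <= KL A B.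
Proof.
move=> A0 B0 AB; rewrite -(subrr (\sum_j B ord0 j)) -{1}AB -sumrB.
by apply: ler_sum => j _; apply: subr_le_mul_ln_div.
Qed.

Lemma KL_eq0 A B : (forall j, 0 < A ord0 j) -> (forall j, 0 < B ord0 j) ->
  \sum_j A ord0 j = \sum_j B ord0 j -> KL A B = 0 -> A = B.
Proof.
move=> A0 B0 AB KL0; apply/rowP => j.
case: (eqVneq (A ord0 j) (B ord0 j)) => // ABj.
suff : 0 < KL A B by rewrite KL0 ltxx.
rewrite -(subrr (\sum_j B ord0 j)) -{1}AB -sumrB /KL.
rewrite [X in X < _](bigD1 j) // [X in _ < X](bigD1 j) //=.
apply: ltr_leD; first exact: subr_lt_mul_ln_div.
by apply: ler_sum => k _; apply: subr_le_mul_ln_div.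
Qed.

Lemma KL_compensation m (Phi : 'M[R]_(m, n)) (mu : 'rV[R]_m) B :
  (forall i j, 0 < Phi i j) -> (forall j, 0 < (mu *m Phi) ord0 j) ->
  (forall j, 0 < B ord0 j) ->
  \sum_i mu ord0 i * KL (row i Phi) B =
  \sum_i mu ord0 i * KL (row i Phi) (mu *m Phi) + KL (mu *m Phi) B.
Proof.
move=> Phi0 M0 B0; set M := mu *m Phi.
have splitKL i : KL (row i Phi) B =
    KL (row i Phi) M + \sum_j Phi i j * ln (M ord0 j / B ord0 j).
  rewrite /KL -big_split; apply: eq_bigr => j _ /=.
  by rewrite mxE; apply: mul_ln_div_split.
under eq_bigr do rewrite splitKL mulrDr.
rewrite big_split /=; congr (_ + _).
under eq_bigr do rewrite mulr_sumr.
rewrite exchange_big; apply: eq_bigr => j _ /=.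
set L := ln _; rewrite mxE mulr_suml.
by apply: eq_bigr => i _; rewrite mulrA.
Qed.

End KullbackLeibler.

Section Simplex.
Variables (R : realType) (n : nat).
Implicit Types A B v : 'rV[R]_n.

Lemma open_simplex_le1 A : in_open_simplex A -> forall j, A ord0 j <= 1.
Proof.
by move=> [A0 <-] j; rewrite (bigD1 j) //= lerDl sumr_ge0 // => k _; apply: ltW.
Qed.

Lemma open_simplex_lower_bound A : in_open_simplex A ->
  exists2 q, 0 < q <= 1 & forall j, q <= A ord0 j.
Proof.
move=> hA; have [A0 _] := hA; have A1 := open_simplex_le1 hA.
have prod_le1 (P : pred 'I_n) : \prod_(k | P k) A ord0 k <= 1.
  by apply: prodr_ile1 => k _; rewrite ltW ?A1.
exists (\prod_k A ord0 k); first by rewrite prod_le1 andbT prodr_gt0.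
by move=> j; rewrite (bigD1 j) //= ler_piMr ?prod_le1 ?ltW.
Qed.

Lemma KL_segment_le A B v t : (forall j, 0 < A ord0 j) -> (forall j, 0 < B ord0 j) ->
  (forall j, 0 < (A + t *: v) ord0 j) ->
  KL (A + t *: v) B <= KL A B + t * \sum_j v ord0 j * ln (A ord0 j / B ord0 j)
                     + t ^+ 2 * \sum_j v ord0 j ^+ 2 / A ord0 j + t * \sum_j v ord0 j.
Proof.
move=> A0 B0 At0; rewrite /KL !mulr_sumr -!big_split /=.
apply: ler_sum => j _; have := At0 j; rewrite !mxE.
set a := A ord0 j; set b := B ord0 j; set w := v ord0 j => aw0.
rewrite (mul_ln_div_split aw0 (A0 j) (B0 j)).
have := mul_ln_div_le aw0 (A0 j).
have -> : (a + t * w - a) ^+ 2 / a + (a + t * w - a) = t ^+ 2 * (w ^+ 2 / a) + t * w.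
  by field; exact: lt0r_neq0 (A0 j).
have -> : (a + t * w) * ln (a / b) = a * ln (a / b) + t * (w * ln (a / b)) by ring.
lra.
Qed.

End Simplex.

Section Channel.
Variables (R : realType) (m n : nat) (Phi : 'M[R]_(m, n)).
Hypothesis Phi_rows : forall i, in_open_simplex (row i Phi).
Implicit Types (Q : 'rV[R]_n) (l : 'rV[R]_m) (A : pred 'I_m).

Lemma channel_gt0 i j : 0 < Phi i j.
Proof. by have := (Phi_rows i).1 j; rewrite mxE. Qed.

Lemma channel_le1 i j : Phi i j <= 1.
Proof. by have := open_simplex_le1 (Phi_rows i) j; rewrite mxE. Qed.

Lemma channel_row_sum i : \sum_j Phi i j = 1.
Proof. by rewrite -(Phi_rows i).2; apply: eq_bigr => j _; rewrite mxE. Qed.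

Lemma sum_mulmx_channel l : \sum_j (l *m Phi) ord0 j = \sum_i l ord0 i.
Proof.
under eq_bigr do rewrite mxE.
rewrite exchange_big; apply: eq_bigr => i _.
by rewrite -mulr_sumr channel_row_sum mulr1.
Qed.

Lemma mulmx_channel_gt0 l : in_closed_simplex l ->
  forall j, 0 < (l *m Phi) ord0 j.
Proof.
move=> [l0 l1] j.
have term_ge0 i : true -> 0 <= l ord0 i * Phi i j.
  by move=> _; rewrite mulr_ge0 // ltW // channel_gt0.
rewrite mxE lt_def sumr_ge0 // andbT; apply/eqP => sum0.
move: (oner_neq0 R); rewrite -l1 big1 ?eqxx // => i _.
move/eqP: (psumr_eq0P term_ge0 sum0 (i := i) isT).
by rewrite mulf_eq0 (gt_eqF (channel_gt0 i j)) orbF => /eqP.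
Qed.

Lemma affL_segment A Q (i0 : 'I_m) t : affL Phi A Q -> A i0 ->
  (forall j, 0 < (Q + t *: (row i0 Phi - Q)) ord0 j) ->
  affL Phi A (Q + t *: (row i0 Phi - Q)).
Proof.
move=> [[_ Q1] [c [c1 eQ]]] Ai0 Qt0; split; first split => //.
  under eq_bigr do rewrite !mxE.
  by rewrite big_split /= -mulr_sumr sumrB Q1 channel_row_sum subrr mulr0 addr0.
have sum_delta : \sum_(i | A i) ((i == i0)%:R : R) = 1.
  by rewrite (bigD1 i0) //= eqxx big1 ?addr0 // => i /andP[_ /negbTE ->].
have sum_deltaZ : \sum_(i | A i) (i == i0)%:R *: row i Phi = row i0 Phi.
  rewrite (bigD1 i0) //= eqxx scale1r big1 ?addr0 // => i /andP[_ /negbTE ->].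
  by rewrite scale0r.
exists (fun i => (1 - t) * c i + t * (i == i0)%:R); split.
  by rewrite big_split /= -!mulr_sumr c1 sum_delta !mulr1 subrK.
under eq_bigr do rewrite scalerDl -!scalerA.
rewrite big_split /= -!scaler_sumr -eQ sum_deltaZ scalerBr scalerBl scale1r.
by rewrite addrCA addrC.
Qed.

Lemma Iproj_orthogonal A (Q' : 'rV[R]_n) Q (i0 : 'I_m) : (forall j, 0 < Q' ord0 j) ->
  is_Iproj Phi A Q' Q -> A i0 ->
  \sum_j (Phi i0 j - Q ord0 j) * ln (Q ord0 j / Q' ord0 j) = 0.
Proof.
move=> Q'0 [QA Qmin] Ai0; have [[Q0 Q1] _] := QA.
have [q /andP[q0 q1] qQ] := open_simplex_lower_bound (conj Q0 Q1).
set v := row i0 Phi - Q.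
have v_entry j : v ord0 j = Phi i0 j - Q ord0 j by rewrite !mxE.
have v_sum : \sum_j v ord0 j = 0.
  by under eq_bigr do rewrite v_entry; rewrite sumrB channel_row_sum Q1 subrr.
have -> : \sum_j (Phi i0 j - Q ord0 j) * ln (Q ord0 j / Q' ord0 j) =
          \sum_j v ord0 j * ln (Q ord0 j / Q' ord0 j).
  by apply: eq_bigr => j _; rewrite v_entry.
apply: (@quadratic_ge0_stationary _ q _ (\sum_j v ord0 j ^+ 2 / Q ord0 j)) => //.
  by apply: sumr_ge0 => j _; rewrite divr_ge0 ?sqr_ge0 ?ltW.
move=> t /andP[tl tr].
have Qt0 j : 0 < (Q + t *: v) ord0 j.
  rewrite !mxE; have := qQ j; have := Q0 j.
  have := channel_gt0 i0 j; have := channel_le1 i0 j.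
  by case: (leP 0 t) => t0; nra.
have := Qmin _ (affL_segment QA Ai0 Qt0).
have := KL_segment_le Q0 Q'0 Qt0; rewrite v_sum mulr0 addr0.
lra.
Qed.

Lemma Iproj_pythagoras A (Q' : 'rV[R]_n) Q (i0 : 'I_m) : (forall j, 0 < Q' ord0 j) ->
  is_Iproj Phi A Q' Q -> A i0 ->
  KL (row i0 Phi) Q' = KL (row i0 Phi) Q + KL Q Q'.
Proof.
move=> Q'0 QI Ai0; have Q0 := QI.1.1.1.
rewrite -[RHS]addr0 -(Iproj_orthogonal Q'0 QI Ai0) /KL -!big_split.
apply: eq_bigr => j _ /=; rewrite mxE (mul_ln_div_split (channel_gt0 i0 j) (Q0 j) (Q'0 j)).
ring.
Qed.

Lemma mutual_infoE l : mutual_info l Phi = \sum_i l ord0 i * KL (row i Phi) (l *m Phi).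
Proof.
rewrite /mutual_info /KL; apply: eq_bigr => i _.
by rewrite mulr_sumr; apply: eq_bigr => j _; rewrite !mxE mulrA.
Qed.

Lemma mutual_info_add_KL_le l Q C : in_closed_simplex l -> (forall j, 0 < Q ord0 j) ->
  (forall i, KL (row i Phi) Q <= C) -> mutual_info l Phi + KL (l *m Phi) Q <= C.
Proof.
move=> [l0 l1] Q0 KL_le.
rewrite mutual_infoE -(KL_compensation channel_gt0 (mulmx_channel_gt0 (conj l0 l1)) Q0).
rewrite -[C]mul1r -l1 mulr_suml; apply: ler_sum => i _.
by rewrite ler_wpM2l.
Qed.

End Channel.

Lemma sum_mul_const_on_support (R : pzRingType) (I : finType) (w X : I -> R) c :
  \sum_i w i = 1 ->
  (forall i, w i != 0 -> X i = c) -> \sum_i w i * X i = c.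
Proof.
move=> w1 Xc; rewrite -[c]mul1r -w1 mulr_suml; apply: eq_bigr => i _.
by case: (eqVneq (w i) 0) => [->|/Xc ->]; rewrite ?mul0r.
Qed.

Section Weights.
Variables (R : realDomainType) (I : finType).
Implicit Types w X : I -> R.

Lemma le_of_neg_weight w X i0 C : \sum_i w i = 1 -> w i0 < 0 ->
  (forall i, i != i0 -> w i * X i <= w i * C) -> C <= \sum_i w i * X i -> X i0 <= C.
Proof.
move=> w1 wi0 wX; rewrite (bigD1 i0) //= in w1; rewrite (bigD1 i0) //=.
have : \sum_(i | i != i0) w i * X i <= (\sum_(i | i != i0) w i) * C.
  by rewrite mulr_suml; apply: ler_sum.
have -> : \sum_(i | i != i0) w i = 1 - w i0 by rewrite -w1 addrAC subrr add0r.
nra.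
Qed.

End Weights.

Lemma ord_pred_exists N (k : 'I_N) : val k != 0%N -> exists k' : 'I_N, val k = (val k').+1.
Proof.
move=> k0; exists (Ordinal (leq_ltn_trans (leq_pred k) (ltn_ord k))) => /=.
by rewrite prednK // lt0n.
Qed.

Definition supported_from (R : zmodType) m (l : 'rV[R]_m) (k : nat) :=
  forall i : 'I_m, l ord0 i != 0 -> (k <= i)%N.

Section ProjectionChain.
Variables (R : realType) (m n : nat) (Phi : 'M[R]_(m, n)) (Q : 'I_m.-1 -> 'rV[R]_n).
Hypothesis Phi_rows : forall i, in_open_simplex (row i Phi).
Hypothesis Q_first : forall k : 'I_m.-1, val k = 0%N -> is_equidistant Phi (Q k).
Hypothesis Q_next : forall k k' : 'I_m.-1, val k = (val k').+1 ->
  is_Iproj Phi (fun i : 'I_m => (val k <= val i)%N) (Q k') (Q k).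
Implicit Types k : 'I_m.-1.

Lemma chain_in_simplex k : in_open_simplex (Q k).
Proof.
have [/Q_first [[]] //|/ord_pred_exists [k' /Q_next [[]]] //] := eqVneq (val k) 0%N.
Qed.

Lemma chain_equidistant k (i i' : 'I_m) : (val k <= i)%N -> (val k <= i')%N ->
  KL (row i Phi) (Q k) = KL (row i' Phi) (Q k).
Proof.
move: {2}(val k) (erefl (val k)) i i' => s; elim: s k => [|s IH] k ks i i' ki ki'.
  exact: (Q_first ks).2.
have [k' kk'] : exists k' : 'I_m.-1, val k = (val k').+1.
  by apply: ord_pred_exists; rewrite ks.
have Q'0 := (chain_in_simplex k').1; have QI := Q_next kk'.
rewrite -[LHS](addrK (KL (Q k) (Q k'))) -[RHS](addrK (KL (Q k) (Q k'))).
rewrite -!(Iproj_pythagoras Phi_rows Q'0 QI) //.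
congr (_ - _); apply: IH; try by apply: ltnW; rewrite -kk'.
by apply: succn_inj; rewrite -kk'.
Qed.

Definition chain_radius k := KL (row (widen_ord (leq_pred m) k) Phi) (Q k).

Lemma chain_KL_row k (i : 'I_m) : (val k <= i)%N -> KL (row i Phi) (Q k) = chain_radius k.
Proof. by move=> ki; apply: chain_equidistant. Qed.

Lemma sum_KL_chain k (l : 'rV[R]_m) : \sum_i l ord0 i = 1 -> supported_from l k ->
  \sum_i l ord0 i * KL (row i Phi) (Q k) = chain_radius k.
Proof. by move=> l1 lk; apply: sum_mul_const_on_support => // i /lk; apply: chain_KL_row. Qed.

Variable lam : 'I_m.-1 -> 'rV[R]_m.
Hypothesis lam_bary : forall k, is_barycentric Phi (Q k) (lam k).

Lemma chain_radius_le k B : supported_from (lam k) k -> in_open_simplex B ->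
  chain_radius k <= \sum_i lam k ord0 i * KL (row i Phi) B.
Proof.
move=> lk [B0 B1]; have [l1 eQ] := lam_bary k; have [Q0 Q1] := chain_in_simplex k.
have lamQ0 : forall j, 0 < (lam k *m Phi) ord0 j by rewrite -eQ.
rewrite (KL_compensation (channel_gt0 Phi_rows) lamQ0 B0) -eQ sum_KL_chain // lerDl.
by apply: KL_ge0; rewrite ?Q1 ?B1.
Qed.

Lemma chain_radius_antitone k k' : (val k <= val k')%N -> supported_from (lam k') k' ->
  chain_radius k' <= chain_radius k.
Proof.
move=> kk' lk'; rewrite -(sum_KL_chain (lam_bary k').1 (k := k)).
  exact: chain_radius_le (chain_in_simplex k).
by move=> i /lk'; apply: leq_trans.
Qed.

Variable K : 'I_m.-1.
Hypothesis lam_before_K : forall k, (val k < val K)%N -> forall i : 'I_m,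
  ((val i < val k)%N -> lam k ord0 i = 0) /\ (val i = val k -> lam k ord0 i < 0) /\
  ((val k < val i)%N -> 0 < lam k ord0 i).
Hypothesis lam_K : supported_from (lam K) K.

Lemma supported_from_before_K k : (val k < val K)%N -> supported_from (lam k) k.
Proof.
move=> kK i; rewrite leqNgt; apply: contra => ik.
by have [-> // _] := lam_before_K kK i.
Qed.

Lemma KL_rows_le_radius (i : 'I_m) : KL (row i Phi) (Q K) <= chain_radius K.
Proof.
suff KL_le d (i' : 'I_m) : (m <= i' + d)%N -> KL (row i' Phi) (Q K) <= chain_radius K.
  by apply: (KL_le m); rewrite leq_addl.
elim: d i' => [|d IH] i' i'd; first by move: i'd; rewrite addn0 leqNgt ltn_ord.
have [Ki'|i'K] := leqP (val K) i'; first by rewrite chain_KL_row.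
pose k : 'I_m.-1 := Ordinal (ltn_trans i'K (ltn_ord K)).
have lam_k := lam_before_K (k := k) i'K.
apply: (@le_of_neg_weight _ _ (fun j => lam k ord0 j) (fun j => KL (row j Phi) (Q K)) i').
- exact: (lam_bary k).1.
- by have [_ [-> //]] := lam_k i'.
- move=> j ji' /=; have [lam_lt [_ lam_gt]] := lam_k j.
  case: (ltngtP (val j) i') => [ji|i'j|/val_inj ji]; last by rewrite ji eqxx in ji'.
  + by rewrite lam_lt // !mul0r.
  + apply: ler_wpM2l; first exact/ltW/lam_gt.
    by apply: IH; rewrite (leq_trans i'd) // -addSnnS leq_add2r.
- rewrite /=; apply: le_trans (chain_radius_antitone (k := k) (ltnW i'K) lam_K) _.
  exact: chain_radius_le (supported_from_before_K (k := k) i'K) (chain_in_simplex K).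
Qed.

End ProjectionChain.

(* Indices are 0-based: row i (i : 'I_m) is P^{i+1}; k : 'I_m.-1 ranges over
   0, ..., m-2; L_k = L(P^{k+1}, ..., P^m) is the hull of rows with index >= k. *)
Theorem theorem13 (R : realType) (m n : nat) (Phi : 'M[R]_(m, n))
  (Q : 'I_m.-1 -> 'rV[R]_n) (lam : 'I_m.-1 -> 'rV[R]_m) (K : 'I_m.-1) :
  (2 <= m)%N ->
  (forall i : 'I_m, in_open_simplex (row i Phi)) ->
  general_position Phi ->
  (forall k : 'I_m.-1, val k = 0%N -> is_equidistant Phi (Q k)) ->
  (forall (k k' : 'I_m.-1), val k = (val k').+1 ->
      is_Iproj Phi (fun i : 'I_m => (val k <= val i)%N) (Q k') (Q k)) ->
  (forall k : 'I_m.-1, is_barycentric Phi (Q k) (lam k)) ->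
  (forall k : 'I_m.-1, (val k < val K)%N ->
      forall i : 'I_m,
        ((val i < val k)%N -> lam k ord0 i = 0) /\
        (val i = val k -> lam k ord0 i < 0) /\
        ((val k < val i)%N -> 0 < lam k ord0 i)) ->
  (if val K == 0%N then forall i : 'I_m, 0 <= lam K ord0 i
   else forall i : 'I_m,
        ((val i < val K)%N -> lam K ord0 i = 0) /\
        ((val K <= val i)%N -> 0 < lam K ord0 i)) ->
  let CK := KL (row (widen_ord (leq_pred m) K) Phi) (Q K) in
  [/\ (forall l : 'rV[R]_m, in_closed_simplex l -> mutual_info l Phi <= CK),
      (exists2 l : 'rV[R]_m, in_closed_simplex l & mutual_info l Phi = CK)
    & (forall l : 'rV[R]_m, in_closed_simplex l -> mutual_info l Phi = CK ->
         l *m Phi = Q K)].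
Proof.
(* General position is what makes the equidistant point and the projections exist;
   here they are given. *)
move=> _ Phi_rows _ Q_first Q_next lam_bary lam_before_K lam_K CK.
have [Q0 Q1] := chain_in_simplex Q_first Q_next K.
have [lam1 eQK] := lam_bary K.
have supp_K : supported_from (lam K) K.
  move=> i; move: lam_K; case: eqP => [-> //|_ lamK].
  by rewrite leqNgt; apply: contra => /(lamK i).1 ->.
have lam_simplex : in_closed_simplex (lam K).
  split=> // i; move: lam_K; case: eqP => _ lamK; first exact: lamK.
  by case: (ltnP i K) => iK; [rewrite (lamK i).1 | exact/ltW/(lamK i).2].
have KL_le := KL_rows_le_radius Phi_rows Q_first Q_next lam_bary lam_before_K supp_K.
have info_le l : in_closed_simplex l -> mutual_info l Phi + KL (l *m Phi) (Q K) <= CK.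
  by move=> ls; apply: mutual_info_add_KL_le.
have KL_out_ge0 l : in_closed_simplex l -> 0 <= KL (l *m Phi) (Q K).
  move=> ls; apply: KL_ge0 (mulmx_channel_gt0 Phi_rows ls) Q0 _.
  by rewrite sum_mulmx_channel // ls.2 Q1.
split.
- by move=> l ls; have := info_le l ls; have := KL_out_ge0 l ls; lra.
- by exists (lam K) => //; rewrite mutual_infoE -eQK; apply: sum_KL_chain.
- move=> l ls Il; apply: KL_eq0 (mulmx_channel_gt0 Phi_rows ls) Q0 _ _.
    by rewrite sum_mulmx_channel // ls.2 Q1.
  by have := info_le l ls; have := KL_out_ge0 l ls; rewrite Il; lra.
Qed.
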